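(* Let $d\ge2$, $n\ge1$, $\gamma$ a positive conductivity on the lattice graph below, and $d\le t\le dn-1$. Then $\ker T_1^{(t-1)}\subseteq\ker T_1^{(t)}$, where $\mathbb R^{J_{t-1}^{\mathcal S}}$ is regarded as a subspace of $\mathbb R^{J_t^{\mathcal S}}$ via extension by zero.
   Context: Lattice: $D=\{x\in\mathbb Z^d:1\le x_i\le n\ \forall i\}$, $\partial D=\{p\in\mathbb Z^d:\min_{q\in D}\|q-p\|_{\ell^1}=1\}$; $E$ = unordered pairs $pq\subseteq D\cup\partial D$ with $\|p-q\|_{\ell^1}=1$, not both in $\partial D$; $\mathcal N(p)=\{q:pq\in E\}$. Conductivity $\gamma:E\to(0,\infty)$, symmetric. $S_\gamma\varphi$ is the unique $\mathbf u\in\mathbb R^{D\cup\partial D}$ with $\sum_{q\in\mathcal N(p)}\gamma_{pq}(\mathbf u_q-\mathbf u_p)=0$ for all $p\in D$ and $\mathbf u=\varphi$ on $\partial D$. Functions on subsets are extended by zero. With $s(x)=\sum_ix_i$: $L_t=\{x\in D:s(x)=t\}$, $K_t^+=\{x\in\partial D:s(x)=t,\max_ix_i=n+1\}$, $K_t^-=\{x\in\partial D:s(x)=t,\min_ix_i=0\}$, $K_t^{\mathcal S\pm}=\bigcup_{\ell\le t}K_\ell^\pm$, $J_t^{\mathcal S}=K_t^{\mathcal S-}\cup K_{t+1}^{\mathcal S+}$. $T_1^{(t)}:\mathbb R^{J_t^{\mathcal S}}\to\mathbb R^{L_{t+1}}$, $\varphi\mapsto(S_\gamma\varphi)|_{L_{t+1}}$.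 *)

From HB Require Import structures.
From mathcomp Require Import all_boot all_order all_algebra.
From mathcomp Require Import reals.
Set Implicit Arguments. Unset Strict Implicit. Unset Printing Implicit Defensive.
Import Order.TTheory GRing.Theory Num.Theory.
Local Open Scope ring_scope.

Definition pt (d : nat) := 'I_d -> int.

Definition l1 d (p q : pt d) : int := \sum_(i < d) `|p i - q i|.

Definition ssum d (x : pt d) : int := \sum_(i < d) x i.

Definition inD d (n : nat) (x : pt d) : bool :=
  [forall i, (1 <= x i) && (x i <= n%:Z)].

(* the points of D, enumerated by {ffun 'I_d -> 'I_n} via f |-> f + 1 *)
Definition ptD d n (f : {ffun 'I_d -> 'I_n}) : pt d := fun i => (f i)%:Z + 1.

(* boundary: min_{q in D} ||q - p||_1 = 1 *)
Definition inBd d (n : nat) (p : pt d) : bool :=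
  [forall f : {ffun 'I_d -> 'I_n}, 1 <= l1 (ptD f) p] &&
  [exists f : {ffun 'I_d -> 'I_n}, l1 (ptD f) p == 1].

Definition inDbar d n (p : pt d) : bool := inD n p || inBd n p.

Definition isE d n (p q : pt d) : bool :=
  [&& l1 p q == 1, inDbar n p, inDbar n q & ~~ (inBd n p && inBd n q)].

(* p +/- e_i ; every q with ||p-q||_1 = 1 occurs in nbrs p *)
Definition shift d (p : pt d) (i : 'I_d) (s : int) : pt d :=
  fun j => if j == i then p j + s else p j.
Definition nbrs d (p : pt d) : seq (pt d) :=
  [seq shift p i s | i <- enum 'I_d, s <- [:: 1; -1]].

Definition kirchhoff (R : realType) d n (gamma : pt d -> pt d -> R)
  (u : pt d -> R) (p : pt d) : R :=
  \sum_(q <- nbrs p | isE n p q) gamma p q * (u q - u p).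

(* u = S_gamma phi: u solves the Dirichlet problem with boundary data phi *)
Definition is_Ssol (R : realType) d n (gamma : pt d -> pt d -> R)
  (phi u : pt d -> R) : Prop :=
  (forall p, inD n p -> kirchhoff n gamma u p = 0) /\
  (forall p, inBd n p -> u p = phi p).

Definition inL d n (t : int) (x : pt d) : bool := inD n x && (ssum x == t).

Definition maxis d n (x : pt d) : bool :=
  [exists i, x i == n%:Z + 1] && [forall i, x i <= n%:Z + 1].
Definition minis0 d (x : pt d) : bool :=
  [exists i, x i == 0] && [forall i, 0 <= x i].

(* K_t^{S+} = U_{l <= t} K_l^+, K_t^{S-} = U_{l <= t} K_l^- *)
Definition inKSp d n (t : int) (x : pt d) : bool :=
  [&& inBd n x, ssum x <= t & maxis n x].
Definition inKSm d n (t : int) (x : pt d) : bool :=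
  [&& inBd n x, ssum x <= t & minis0 x].

Definition inJ d n (t : int) (x : pt d) : bool :=
  inKSm n t x || inKSp n (t + 1) x.

From HB Require Import structures.
From mathcomp Require Import all_boot all_order all_algebra.
From mathcomp Require Import reals zify lra.
From mathcomp Require Import boolp.
Import Order.TTheory GRing.Theory Num.Theory.
Set Implicit Arguments. Unset Strict Implicit.
Local Open Scope ring_scope.

(* A maximum principle on the region {x in D : s(x) >= t + 1}.  Every lattice
   neighbour of a point of the region lies in the region, on the level L_t, or
   on the boundary outside J_(t-1); u vanishes at the last two kinds.  If u (or
   -u) were positive somewhere in the region, pick a maximiser p that has the
   largest s(p) among all maximisers: no neighbour exceeds u(p) and p + e_0 is
   strictly below it, so the Kirchhoff sum at p is negative, which contradicts
   harmonicity. *)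

Lemma arg_max_tiebreak (disp1 disp2 : Order.disp_t)
    (T1 : orderType disp1) (T2 : orderType disp2) (I : finType) (P : {pred I})
    (F : I -> T1) (G : I -> T2) (i0 : I) :
  P i0 -> exists2 i, P i &
    (forall j, P j -> (F j <= F i)%O) /\ (forall j, P j -> F j = F i -> (G j <= G i)%O).
Proof.
move=> Pi0; have [i1 Pi1 F_max] := arg_maxP F Pi0.
pose P' := [pred j | P j && (F j == F i1)].
have P'i1 : P' i1 by rewrite /= Pi1 eqxx.
have [i /andP[Pi /eqP Fi] G_max] := arg_maxP G P'i1.
exists i => //; split=> [j Pj | j Pj Fj]; first by rewrite Fi; apply: F_max.
by apply: G_max; rewrite /= Pj Fj Fi eqxx.
Qed.

Section Lattice.

Variable d : nat.
Implicit Types (p q : pt d) (n : nat) (t s : int).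

Lemma ssum_shift p i s : ssum (shift p i s) = ssum p + s.
Proof.
rewrite /ssum (bigD1 i) //= [in RHS](bigD1 i) //= /shift eqxx addrAC.
by congr (_ + _ + _); apply: eq_bigr => j /negbTE ->.
Qed.

Lemma l1_shift p i s : l1 p (shift p i s) = `|s|.
Proof.
rewrite /l1 (bigD1 i) //= big1 ?addr0 /shift ?eqxx.
  by rewrite opprD addrA subrr add0r normrN.
by move=> j /negbTE ->; rewrite subrr normr0.
Qed.

Lemma l1xx p : l1 p p = 0.
Proof. by rewrite /l1 big1 // => j _; rewrite subrr normr0. Qed.

Lemma l1_ge0 p q : 0 <= l1 p q.
Proof. exact: sumr_ge0. Qed.

Lemma l1_eq0 p q : (l1 p q == 0) = [forall j, p j == q j].
Proof.
rewrite /l1 psumr_eq0 //; apply/allP/forallP => [H j | H j _].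
  by rewrite -subr_eq0 -normr_eq0; apply: H; rewrite mem_index_enum.
by rewrite normr_eq0 subr_eq0 H.
Qed.

Lemma inD_ptD n (f : {ffun 'I_d -> 'I_n}) : inD n (ptD f).
Proof. by apply/forallP => j; rewrite /ptD; have := ltn_ord (f j); lia. Qed.

Lemma inD_ptDP n p : inD n p -> exists f : {ffun 'I_d -> 'I_n}, ptD f = p.
Proof.
move=> /forallP Dp.
have lt_n j : (`|p j - 1| < n)%N by have := Dp j; lia.
exists [ffun j => Ordinal (lt_n j)]; apply: funext => j.
by rewrite /ptD ffunE /=; have := Dp j; lia.
Qed.

Lemma inD_notBd n p : inD n p -> ~~ inBd n p.
Proof.
by move=> /inD_ptDP [f <-]; apply/negP => /andP [/forallP /(_ f)]; rewrite l1xx.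
Qed.

Lemma shift_notD_inBd n p i s :
  inD n p -> `|s| = 1 -> ~~ inD n (shift p i s) -> inBd n (shift p i s).
Proof.
move=> Dp s_unit notDq; apply/andP; split.
  apply/forallP => f; rewrite -gtz0_ge1 lt_neqAle l1_ge0 andbT eq_sym l1_eq0.
  apply: contra notDq => /forallP eq_q; apply/forallP => j.
  by rewrite -(eqP (eq_q j)); move: j; apply/forallP/inD_ptD.
have [f <-] := inD_ptDP Dp; apply/existsP; exists f.
by rewrite l1_shift s_unit.
Qed.

Lemma isE_shift n p i s : inD n p -> `|s| = 1 -> isE n p (shift p i s).
Proof.
move=> Dp s_unit; rewrite /isE l1_shift s_unit /inDbar Dp (negbTE (inD_notBd Dp)) /=.
case: (boolP (inD n _)) => //= notDq; rewrite andbT; exact: shift_notD_inBd.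
Qed.

Lemma shift_above_level_cases n t p i s :
    inD n p -> t + 1 <= ssum p -> `|s| = 1 ->
  [\/ inD n (shift p i s) /\ t + 1 <= ssum (shift p i s),
       inL n t (shift p i s)
     | inBd n (shift p i s) /\ ~~ inJ n (t - 1) (shift p i s)].
Proof.
move=> Dp p_above s_unit; have sq := ssum_shift p i s.
case: (boolP (inD n (shift p i s))) => [Dq | notDq].
  have [q_above | q_below] := leP (t + 1) (ssum (shift p i s)); first by constructor 1.
  by constructor 2; rewrite /inL Dq /=; apply/eqP; lia.
constructor 3; split; first exact: shift_notD_inBd.
rewrite /inJ /inKSm /inKSp negb_or; apply/andP; split.
  by apply/negP => /and3P [_ q_le _]; lia.
apply/negP => /and3P [_ q_le /andP [/existsP [j /eqP qj] _]].
move/forallP/(_ j): Dp; move: qj; rewrite /shift.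
by case: (j == i) => /=; lia.
Qed.

End Lattice.

Section Kirchhoff.

Variables (R : realType) (d n : nat) (gamma : pt d -> pt d -> R).
Hypothesis gamma_pos : forall p q, isE n p q -> 0 < gamma p q.
Implicit Types (p : pt d) (v : pt d -> R).

Lemma kirchhoffN v p : kirchhoff n gamma (fun x => - v x) p = - kirchhoff n gamma v p.
Proof.
rewrite /kirchhoff -sumrN; apply: eq_bigr => q _.
by rewrite -mulrN opprB opprK addrC.
Qed.

Lemma kirchhoff_inDE v p : inD n p ->
  kirchhoff n gamma v p =
    \sum_(i < d) \sum_(s <- [:: 1; -1]) gamma p (shift p i s) * (v (shift p i s) - v p).
Proof.
move=> Dp; rewrite /kirchhoff big_mkcond /nbrs big_allpairs_dep big_enum /=.
apply: eq_bigr => i _.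
by rewrite !big_cons !big_nil !isE_shift ?normrN ?normr1.
Qed.

Lemma kirchhoff_lt0 v p (i0 : 'I_d) : inD n p ->
    (forall i s, `|s| = 1 -> v (shift p i s) <= v p) ->
    v (shift p i0 1) < v p ->
  kirchhoff n gamma v p < 0.
Proof.
move=> Dp v_le v_lt; rewrite kirchhoff_inDE //.
have gamma_shift_gt0 i s : `|s| = 1 -> 0 < gamma p (shift p i s).
  by move=> s_unit; apply/gamma_pos/isE_shift.
have flux_le0 i s : `|s| = 1 -> gamma p (shift p i s) * (v (shift p i s) - v p) <= 0.
  by move=> s_unit; rewrite pmulr_rle0 ?gamma_shift_gt0 // subr_le0 v_le.
have flux_out_lt0 : gamma p (shift p i0 1) * (v (shift p i0 1) - v p) < 0.
  by rewrite pmulr_rlt0 ?gamma_shift_gt0 ?normr1 // subr_lt0.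
have others_le0 : \sum_(i < d | i != i0) \sum_(s <- [:: 1; -1])
    gamma p (shift p i s) * (v (shift p i s) - v p) <= 0.
  apply: sumr_le0 => i _; rewrite big_seq_cond.
  apply: sumr_le0 => s /andP [+ _]; rewrite !inE => /orP [] /eqP ->;
    by apply: flux_le0; rewrite ?normrN normr1.
have flux_in_le0 : gamma p (shift p i0 (-1)) * (v (shift p i0 (-1)) - v p) <= 0.
  by apply: flux_le0; rewrite normrN normr1.
rewrite (bigD1 i0) //= big_cons big_seq1.
by move: flux_out_lt0 flux_in_le0 others_le0; lra.
Qed.

End Kirchhoff.

Lemma le0_above_level (R : realType) d n (gamma : pt d -> pt d -> R)
    (gamma_pos : forall p q, isE n p q -> 0 < gamma p q) (d_gt0 : (0 < d)%N)
    (t : int) (v : pt d -> R)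
    (v_harmonic : forall p, inD n p -> kirchhoff n gamma v p = 0)
    (v_bd : forall q, inBd n q -> ~~ inJ n (t - 1) q -> v q = 0)
    (v_level : forall x, inL n t x -> v x = 0) :
  forall x, inD n x -> t + 1 <= ssum x -> v x <= 0.
Proof.
move=> x Dx x_above; rewrite leNgt; apply/negP => vx_gt0.
have [f0 f0_x] := inD_ptDP Dx.
pose U := [pred f : {ffun 'I_d -> 'I_n} | t + 1 <= ssum (ptD f)].
have Uf0 : U f0 by rewrite /= f0_x.
have [f Uf [v_max ssum_max]] :=
  arg_max_tiebreak (fun f => v (ptD f)) (fun f => ssum (ptD f)) Uf0.
set p := ptD f in Uf v_max ssum_max; have Dp : inD n p := inD_ptD f.
have vp_gt0 : 0 < v p by rewrite (lt_le_trans vx_gt0) // -f0_x v_max.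
have shift_le i s : `|s| = 1 ->
    v (shift p i s) <= v p /\ (s = 1 -> v (shift p i s) < v p).
  move=> s_unit.
  case: (shift_above_level_cases i Dp Uf s_unit) => [[Dq q_above] | Lq | [Bq notJq]].
  - have [g g_q] := inD_ptDP Dq; have Ug : U g by rewrite /= g_q.
    have vq_le : v (shift p i s) <= v p by rewrite -g_q v_max.
    split=> // s1; rewrite lt_neqAle vq_le andbT; apply/eqP => vq_eq.
    have := ssum_max g Ug; rewrite g_q ssum_shift => /(_ vq_eq); rewrite s1; lia.
  - by rewrite v_level //; split=> [|_]; [exact: ltW|].
  - by rewrite v_bd //; split=> [|_]; [exact: ltW|].
pose i0 : 'I_d := Ordinal d_gt0.
have := kirchhoff_lt0 gamma_pos Dp (fun i s s_unit => (shift_le i s s_unit).1)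
  ((shift_le i0 1 (normr1 _)).2 erefl).
by rewrite v_harmonic // ltxx.
Qed.

Theorem proposition2p3 (R : realType) (d n : nat) (hd : (2 <= d)%N) (hn : (1 <= n)%N)
  (gamma : pt d -> pt d -> R)
  (gamma_sym : forall p q, gamma p q = gamma q p)
  (gamma_pos : forall p q, isE n p q -> 0 < gamma p q)
  (t : nat) (ht1 : (d <= t)%N) (ht2 : (t <= d * n - 1)%N)
  (phi u : pt d -> R)
  (phi_supp : forall x, ~~ inJ n (t%:Z - 1) x -> phi x = 0)
  (hu : is_Ssol n gamma phi u)
  (hker : forall x, inL n (t%:Z) x -> u x = 0) :
  forall x, inL n (t%:Z + 1) x -> u x = 0.
Proof.
move=> x /andP [Dx /eqP x_level]; case: hu => u_harmonic u_bd.
have d_gt0 : (0 < d)%N by apply: leq_trans hd.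
have x_above : t%:Z + 1 <= ssum x by rewrite x_level.
apply/le_anti/andP; split.
  apply: (le0_above_level gamma_pos d_gt0 (t := t%:Z)) => // q Bq notJq.
  by rewrite u_bd // phi_supp.
rewrite -oppr_le0.
apply: (le0_above_level gamma_pos d_gt0 (t := t%:Z) (v := fun y => - u y)) => //.
- by move=> p Dp; rewrite kirchhoffN u_harmonic ?oppr0.
- by move=> q Bq notJq; rewrite u_bd // phi_supp ?oppr0.
- by move=> y Ly; rewrite hker ?oppr0.
Qed.
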